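(* Let $s,k\geq 2$ and $n\geq ks+1$. For any reflection $\alpha$ of $[n]$, i.e., any permutation of $[n]$ of the form $x\mapsto c-x \pmod n$ for some fixed $c$ (residues modulo $n$ taken in $[n]$), the automorphism of $\operatorname{KG}(n,k)_{s-\operatorname{stab}}$ given by $\{i_1,\dots,i_k\}\mapsto\{\alpha(i_1),\dots,\alpha(i_k)\}$ is not a shift of $\operatorname{KG}(n,k)_{s-\operatorname{stab}}$.
   Context: For integers $s,k\geq 2$ and $n\geq ks$, a subset $S\subseteq[n]=\{1,\dots,n\}$ is $s$-stable if $s\leq |i-j|\leq n-s$ for all distinct $i,j\in S$. The $s$-stable Kneser graph $\operatorname{KG}(n,k)_{s-\operatorname{stab}}$ has as vertices the $s$-stable $k$-subsets of $[n]$, two vertices being adjacent iff they are disjoint. Every permutation of $[n]$ in the dihedral group $D_{2n}$ (symmetries of the $n$-cycle $1,2,\dots,n$) induces an automorphism of $\operatorname{KG}(n,k)_{s-\operatorname{stab}}$ by acting elementwise on vertices. A shift of a graph $G$ is an automorphism $\phi$ of $G$ such that $u$ and $\phi(u)$ are adjacent for every vertex $u$. *)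

From mathcomp Require Import all_boot all_order.
Unset Printing Implicit Defensive.

(* Convention: the ground set [n] = {1,...,n} is represented by 'I_n, the
   ordinal i standing for the element i+1.  Differences |i-j| are invariant
   under this shift. *)

Definition stable (n s : nat) (S : {set 'I_n}) : bool :=
  [forall i in S, forall j in S,
     (i != j) ==> ((s <= (i - j) + (j - i)) && ((i - j) + (j - i) <= n - s))].

Definition skg_vertex (n k s : nat) (S : {set 'I_n}) : bool :=
  (#|S| == k) && stable n s S.

Definition skg_adj (n : nat) (S T : {set 'I_n}) : bool := [disjoint S & T].

Definition skg_automorphism (n k s : nat) (phi : {set 'I_n} -> {set 'I_n}) : Prop :=
  (forall S, skg_vertex n k s S -> skg_vertex n k s (phi S)) /\
  {in skg_vertex n k s &, injective phi} /\
  (forall T, skg_vertex n k s T -> exists2 S, skg_vertex n k s S & phi S = T) /\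
  (forall S T, skg_vertex n k s S -> skg_vertex n k s T ->
     skg_adj n S T = skg_adj n (phi S) (phi T)).

Definition skg_shift (n k s : nat) (phi : {set 'I_n} -> {set 'I_n}) : Prop :=
  skg_automorphism n k s phi /\
  (forall S, skg_vertex n k s S -> skg_adj n S (phi S)).

(* For x : 'I_n (element y = x+1), the residue of c - y mod n is
   r = (c + n*y - y) %% n in {0..n-1}; its representative in [n] is
   (if r = 0 then n else r), whose 0-based index is (r + n - 1) %% n. *)
Definition refl_idx (n c : nat) (x : 'I_n) : nat :=
  ((c + n * x.+1 - x.+1) %% n + n - 1) %% n.

Lemma refl_idx_lt (n c : nat) (x : 'I_n) : refl_idx n c x < n.
Proof. by rewrite /refl_idx ltn_pmod // (leq_ltn_trans _ (ltn_ord x)). Qed.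

Definition reflection (n c : nat) (x : 'I_n) : 'I_n := Ordinal (refl_idx_lt n c x).

Definition set_map (n : nat) (f : 'I_n -> 'I_n) (S : {set 'I_n}) : {set 'I_n} :=
  f @: S.

From mathcomp Require Import all_boot all_order.
From mathcomp Require Import zify.

(** A reflection [x |-> c - x] always sends some point [x] to [x + e] with
   [e] equal to [s] or [s + 1] (mod [n]): solve [2x + e = c - 2] mod [n],
   using [e] to fix the parity when [n] is even.  Since [n >= ks + 1], the
   points [x, x + e, x + e + s, ..., x + e + (k-2)s] form an [s]-stable
   [k]-set [S], and [S] meets its own image, so the reflection is not a shift. *)

Definition stable_pair (n s p q : nat) : bool :=
  s <= (p - q) + (q - p) <= n - s.

Lemma stable_pairC n s p q : stable_pair n s p q = stable_pair n s q p.
Proof. by rewrite /stable_pair addnC. Qed.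

(* Both [a + p] and [a + q] lie below [2n], so each is reduced by at most
   one [n]; a distance [d] becomes [d] or [n - d]. *)
Lemma stable_pair_rot n s a p q : a < n -> p < n -> q < n ->
  stable_pair n s p q -> stable_pair n s ((a + p) %% n) ((a + q) %% n).
Proof.
move=> ha hp hq; rewrite /stable_pair.
have mod_cases x : x < n + n -> (x %% n = x /\ x < n) \/ (x %% n = x - n /\ n <= x).
  move=> hx; case: (ltnP x n) => h; first by left; rewrite modn_small.
  by right; rewrite -{1}(subnK h) modnDr modn_small //; lia.
have [[-> ?]|[-> ?]] := mod_cases (a + p) (leq_add ha (ltnW hp));
have [[-> ?]|[-> ?]] := mod_cases (a + q) (leq_add ha (ltnW hq)); lia.
Qed.

Lemma stable_imset n s k (g : 'I_k -> 'I_n) :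
  (forall i j, i != j -> stable_pair n s (g i) (g j)) -> stable n s (g @: 'I_k).
Proof.
move=> hg; apply/forallP => u; apply/implyP => /imsetP [i _ ->].
apply/forallP => v; apply/implyP => /imsetP [j _ ->].
by apply/implyP => hne; apply: hg; apply: contraNneq hne => ->.
Qed.

Lemma stable_pair_inj n s k (g : 'I_k -> 'I_n) : 0 < s ->
  (forall i j, i != j -> stable_pair n s (g i) (g j)) -> injective g.
Proof.
move=> s0 hg i j gij; apply/eqP; apply: contraT => /hg.
by rewrite /stable_pair gij !subnn; lia.
Qed.

Definition gapped_point (s b i : nat) : nat := i * s + (if i is 0 then 0 else b).

Section GappedPoints.

Variables n k s b : nat.
Hypotheses (s_gt0 : 0 < s) (n_ge : k * s + 1 <= n) (b_le1 : b <= 1).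

Lemma gapped_point_lt i : i < k -> gapped_point s b i < n.
Proof.
move=> ik; rewrite /gapped_point.
have : i.+1 * s <= k * s by rewrite leq_mul2r ik orbT.
case: i ik => [|i] _; rewrite !mulSn; lia.
Qed.

Lemma gapped_point_stable i j : i < k -> j < k -> i != j ->
  stable_pair n s (gapped_point s b i) (gapped_point s b j).
Proof.
wlog lt_ij : i j / i < j.
  move=> wlog_ij ik jk ij; case: (ltngtP i j) => [lt_ij|lt_ji|eq_ij].
  - exact: wlog_ij.
  - by rewrite stable_pairC; apply: wlog_ij; rewrite // eq_sym.
  - by rewrite eq_ij eqxx in ij.
move=> _ jk _; rewrite /stable_pair /gapped_point.
have ij_s : i.+1 * s <= j * s by rewrite leq_mul2r lt_ij orbT.
have jk_s : j.+1 * s <= k * s by rewrite leq_mul2r jk orbT.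
rewrite !mulSn in ij_s jk_s.
case: j lt_ij jk ij_s jk_s => [|j] // _ _ ij_s jk_s.
case: i ij_s => [|i] ij_s; lia.
Qed.

End GappedPoints.

Arguments gapped_point_lt {n k s b}.
Arguments gapped_point_stable {n k s b}.

Lemma vertex_through n k s b (x y : 'I_n) :
  0 < s -> 2 <= k -> k * s + 1 <= n -> b <= 1 -> val y = (x + (s + b)) %% n ->
  exists2 S, skg_vertex n k s S & (x \in S) && (y \in S).
Proof.
move=> s0 k2 n_ge b_le1 y_eq; have n0 : 0 < n := leq_ltn_trans (leq0n x) (ltn_ord x).
pose g (i : 'I_k) : 'I_n := Ordinal (ltn_pmod (x + gapped_point s b i) n0).
have g_stable i j : i != j -> stable_pair n s (g i) (g j).
  have gp_lt (i' : 'I_k) := gapped_point_lt s0 n_ge b_le1 _ (ltn_ord i').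
  move=> ij; apply: stable_pair_rot => //.
  exact: gapped_point_stable s0 n_ge b_le1 _ _ (ltn_ord i) (ltn_ord j) ij.
exists (g @: 'I_k).
  rewrite /skg_vertex card_imset ?card_ord ?eqxx ?stable_imset //.
  exact: stable_pair_inj g_stable.
have k0 : 0 < k by lia.
have k1 : 1 < k by lia.
apply/andP; split.
  apply/imsetP; exists (Ordinal k0) => //; apply: val_inj.
  by rewrite /= /gapped_point mul0n !addn0 modn_small.
apply/imsetP; exists (Ordinal k1) => //; apply: val_inj.
by rewrite y_eq /= /gapped_point mul1n.
Qed.

Lemma refl_idx_eq n c (x : 'I_n) : refl_idx n c x + x.+2 = c %[mod n].
Proof.
have n0 : 0 < n := leq_ltn_trans (leq0n x) (ltn_ord x).
rewrite /refl_idx modnDml -addnBA // -addnA modnDml.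
have -> : c + n * x.+1 - x.+1 + (n - 1 + x.+2) = x.+2 * n + c.
  have : x.+1 <= n * x.+1 by apply: leq_pmull.
  rewrite [x.+2 * n]mulnC !mulnS; lia.
by rewrite modnMDl.
Qed.

Lemma reflection_val n c (x : 'I_n) z :
  z + x.+2 = c %[mod n] -> val (reflection n c x) = z %% n.
Proof.
move=> hz; rewrite /= -(modn_small (refl_idx_lt n c x)); apply/eqP.
by rewrite -(eqn_modDr x.+2) refl_idx_eq -hz.
Qed.

Lemma reflection_gap n s c : 0 < n ->
  exists x : 'I_n, exists2 b, b <= 1 & val (reflection n c x) = (x + (s + b)) %% n.
Proof.
move=> n0.
suff [y [b b_le1 hy]] : exists y, exists2 b, b <= 1 & 2 * y + (s + b + 2) = c %[mod n].
  exists (Ordinal (ltn_pmod y n0)), b => //; apply: reflection_val => /=.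
  have -> : y %% n + (s + b) + (y %% n).+2 = 2 * (y %% n) + (s + b + 2) by lia.
  by rewrite -modnDml modnMmr modnDml.
have big : s + 2 <= (s + 2) * n := leq_pmulr _ n0.
set w := c %% n + (s + 2) * n - (s + 2).
have w_half := odd_double_half w; rewrite -muln2 in w_half.
rewrite -(modn_mod c).
case odd_w: (odd w) w_half => /= w_half; last first.
  exists w./2, 0 => //; rewrite -(modnMDl (s + 2) (c %% n)); congr (_ %% _); lia.
case odd_n: (odd n).
  have wn_half := odd_double_half (w + n); rewrite -muln2 oddD odd_w odd_n /= in wn_half.
  exists (w + n)./2, 0 => //; rewrite -(modnMDl (s + 3) (c %% n)); congr (_ %% _).
  rewrite mulnDl; lia.
exists w./2, 1 => //; rewrite -(modnMDl (s + 2) (c %% n)); congr (_ %% _); lia.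
Qed.

Theorem mainTheorem8 (n k s c : nat) :
  2 <= s -> 2 <= k -> k * s + 1 <= n ->
  ~ skg_shift n k s (set_map n (reflection n c)).
Proof.
move=> s2 k2 n_ge [_ shifted].
have n0 : 0 < n by lia.
have [x [b b_le1 refl_x]] := reflection_gap n s c n0.
have [S vS /andP [xS reflS]] :=
  vertex_through n k s b x _ (ltnW s2) k2 n_ge b_le1 refl_x.
have := shifted S vS; rewrite /skg_adj => /disjointFr /(_ reflS).
by rewrite /set_map imset_f.
Qed.
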